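(* Let $k\ge3$ be odd and let $G$ be a $k$-uniform hypergraph. Then the number of minimal canonical H-eigenvectors of the signless Laplacian tensor $\mathcal D+\mathcal A$ corresponding to the eigenvalue $0$, counted with $\mathbf x$ and $-\mathbf x$ identified, equals the number of singletons (isolated vertices) of $G$.
   Context: A $k$-uniform hypergraph $G=(V,E)$ has vertex set $V=[n]$ ($n\ge k$) and nonempty edge set $E$ of $k$-element subsets; $E_i=\{e\in E:i\in e\}$, $d_i=|E_i|$; a singleton is a vertex with $d_i=0$. $\mathcal A$: $a_{i_1\dots i_k}=\frac1{(k-1)!}$ if $\{i_1,\dots,i_k\}\in E$, else $0$; $\mathcal D$ diagonal with $d_{i\dots i}=d_i$; so $((\mathcal D+\mathcal A)\mathbf x^{k-1})_i=d_ix_i^{k-1}+\sum_{e\in E_i}\prod_{j\in e\setminus\{i\}}x_j$. A nonzero $\mathbf x\in\mathbb C^n$ is an eigenvector of $\mathcal T$ for $\lambda$ if $(\mathcal T\mathbf x^{k-1})_i=\lambda x_i^{k-1}$ for all $i$; an H-eigenvector is a real eigenvector; canonical means $\max_i|x_i|=1$; an eigenvector of eigenvalue $0$ is minimal if no eigenvector of eigenvalue $0$ has support strictly contained in its support. *)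

From HB Require Import structures.
From mathcomp Require Import all_boot all_order all_algebra.
Set Implicit Arguments. Unset Strict Implicit. Unset Printing Implicit Defensive.
Import Order.TTheory GRing.Theory Num.Theory.
Local Open Scope ring_scope.

Definition hdeg (n : nat) (E : {set {set 'I_n}}) (i : 'I_n) : nat :=
  #|[set e in E | i \in e]|.

(* ((D + A) x^{k-1})_i = d_i x_i^{k-1} + sum_{e in E_i} prod_{j in e \ {i}} x_j *)
Definition signless_lap_apply (C : numClosedFieldType) (n k : nat)
  (E : {set {set 'I_n}}) (x : {ffun 'I_n -> C}) (i : 'I_n) : C :=
  (hdeg E i)%:R * x i ^+ k.-1
  + \sum_(e in E | i \in e) \prod_(j in e :\ i) x j.

Definition is_eigvec (C : numClosedFieldType) (n k : nat)
  (E : {set {set 'I_n}}) (x : {ffun 'I_n -> C}) (lam : C) : Prop :=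
  x != 0 /\ forall i, signless_lap_apply k E x i = lam * x i ^+ k.-1.

Definition supp (C : numClosedFieldType) (n : nat) (x : {ffun 'I_n -> C})
  : {set 'I_n} := [set i | x i != 0].

(* minimal eigenvector of eigenvalue 0 (minimality among all, complex, eigenvectors) *)
Definition minimal_eigvec0 (C : numClosedFieldType) (n k : nat)
  (E : {set {set 'I_n}}) (x : {ffun 'I_n -> C}) : Prop :=
  is_eigvec k E x 0 /\
  ~ (exists y : {ffun 'I_n -> C}, is_eigvec k E y 0 /\ supp y \proper supp x).

(* H-eigenvector: real eigenvector *)
Definition is_real_vec (C : numClosedFieldType) (n : nat) (x : {ffun 'I_n -> C})
  : Prop := forall i, x i \is Num.real.

Definition is_canonical (C : numClosedFieldType) (n : nat) (x : {ffun 'I_n -> C})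
  : Prop := (forall i, `|x i| <= 1) /\ (exists i, `|x i| = 1).

Definition minimal_canonical_H_eigvec0 (C : numClosedFieldType) (n k : nat)
  (E : {set {set 'I_n}}) (x : {ffun 'I_n -> C}) : Prop :=
  minimal_eigvec0 k E x /\ is_real_vec x /\ is_canonical x.

Definition singletons (n : nat) (E : {set {set 'I_n}}) : {set 'I_n} :=
  [set i | hdeg E i == 0%N].

From HB Require Import structures.
From mathcomp Require Import all_boot all_order all_algebra.
Import Order.TTheory GRing.Theory Num.Theory.
Set Implicit Arguments. Unset Strict Implicit. Unset Printing Implicit Defensive.
Local Open Scope ring_scope.

(* Minimal canonical H-eigenvectors of D + A for the eigenvalue 0 are exactly
   the vectors +e_i and -e_i with i an isolated vertex.

   1. If x is real, canonical and |x_i| = 1, then x_i^(k-1) = 1 since k - 1 is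
      even, so row i of (D + A)x^(k-1) = 0 is a sum over the edges e through i
      of the nonnegative terms 1 + prod_(j in e \ i) x_j.  Hence every such
      product equals -1.
   2. Then every entry of x on an edge e through i has modulus 1, so the same
      applies at every vertex of e; comparing the products over the whole of e
      shows that x is constant on e, and the product over e \ i becomes
      x_i^(k-1) = 1, a contradiction.  So i is isolated.
   3. Conversely c e_i (c <> 0, i isolated) is an eigenvector of eigenvalue 0,
      minimal because its support is a singleton; minimality of x then forces
      supp x = {i}, i.e. x = x_i e_i with x_i = 1 or -1.
   The list of the e_i, i isolated, is then the required set of representatives. *)

Section UnitVectors.
Variables (C : numClosedFieldType) (n : nat).

Definition unitvec (c : C) (i : 'I_n) : {ffun 'I_n -> C} :=
  [ffun j => if j == i then c else 0].

Lemma unitvecN (c : C) (i : 'I_n) : - unitvec c i = unitvec (- c) i.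
Proof. by apply/ffunP => j; rewrite !ffunE; case: ifP; rewrite ?oppr0. Qed.

Lemma unitvec_eq (c d : C) (i j : 'I_n) :
  c != 0 -> unitvec c i = unitvec d j -> i = j /\ c = d.
Proof.
move=> c0 /ffunP/(_ i); rewrite !ffunE eqxx.
by case: (eqVneq i j) => [-> //|_ c_eq0]; rewrite c_eq0 eqxx in c0.
Qed.

Lemma supp_unitvec (c : C) (i : 'I_n) : c != 0 -> supp (unitvec c i) = [set i].
Proof.
by move=> c0; apply/setP => j; rewrite !inE ffunE; case: (eqVneq j i); rewrite ?eqxx.
Qed.

Lemma supp_sub1 (x : {ffun 'I_n -> C}) (i : 'I_n) :
  supp x \subset [set i] -> x = unitvec (x i) i.
Proof.
move/subsetP=> sub; apply/ffunP => j; rewrite ffunE.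
case: (eqVneq j i) => [-> //|ji]; apply/eqP; apply: contraR ji => xj.
by have := sub j; rewrite !inE => ->.
Qed.

Lemma supp_neq0 (x : {ffun 'I_n -> C}) : x != 0 -> supp x != set0.
Proof.
apply: contraNneq => supp0; apply/eqP/ffunP => j; rewrite ffunE.
apply/eqP; apply: contraT => xj.
suff : j \in supp x by rewrite supp0 in_set0.
by rewrite inE.
Qed.

End UnitVectors.

(* An eigenvector of eigenvalue 0 whose support is a single vertex is minimal:
   a strictly smaller support would be empty. *)
Lemma minimal_of_supp1 (C : numClosedFieldType) (n k : nat)
    (E : {set {set 'I_n}}) (x : {ffun 'I_n -> C}) (i : 'I_n) :
  is_eigvec k E x 0 -> supp x = [set i] -> minimal_eigvec0 k E x.
Proof.
move=> xeig suppx; split=> // -[y [[y0 _]]].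
rewrite suppx => /proper_card; rewrite cards1 ltnS leqn0 cards_eq0.
by rewrite (negbTE (supp_neq0 y0)).
Qed.

Lemma prod_norm1_factors (R : numDomainType) (I : finType) (A : {set I})
    (F : I -> R) :
  (forall j, j \in A -> `|F j| <= 1) -> `|\prod_(j in A) F j| = 1 ->
  forall j, j \in A -> `|F j| = 1.
Proof.
move=> Fle prod1 j jA; apply/eqP; rewrite eq_le Fle //=.
rewrite -prod1 (big_setD1 j) //= normrM -[leRHS]mulr1 ler_wpM2l //.
rewrite normr_prod prodr_ile1 // => l; rewrite inE => /andP[_ lA].
by rewrite normr_ge0 Fle.
Qed.

Lemma real_unit_expr_double (R : numDomainType) (c : R) (m : nat) :
  c \is Num.real -> `|c| = 1 -> c ^+ m.*2 = 1.
Proof. by move=> cr c1; rewrite -mul2n exprM -real_normK // c1 !expr1n. Qed.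

(* -1 <> 1, as numeric fields have characteristic 0. *)
Lemma neg1_neq1 (C : numClosedFieldType) : (-1 : C) != 1.
Proof.
rewrite -subr_eq0 -opprD oppr_eq0 (_ : 1 + 1 = 2%:R) //.
by rewrite pnatr_eq0.
Qed.

Section Eigenvectors.
Variables (C : numClosedFieldType) (n k : nat) (E : {set {set 'I_n}}).
Hypothesis uniformE : forall e, e \in E -> #|e| = k.

Lemma hdeg_sum (i : 'I_n) : (hdeg E i)%:R = \sum_(e in E | i \in e) (1 : C).
Proof. by rewrite /hdeg -sumr_const; apply: eq_bigl => e; rewrite inE. Qed.

Section OddUniformity.
Hypothesis k_odd : odd k.

Lemma max_entry_edge_product (x : {ffun 'I_n -> C}) (i : 'I_n) (e : {set 'I_n}) :
  is_real_vec x -> is_eigvec k E x 0 -> (forall j, `|x j| <= 1) ->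
  `|x i| = 1 -> e \in E -> i \in e -> \prod_(j in e :\ i) x j = -1.
Proof.
move=> xr [_ xeig] xle xi1 eE ie.
have xik : x i ^+ k.-1 = 1 by rewrite -odd_halfK // real_unit_expr_double.
have sum0 : \sum_(f in E | i \in f) (1 + \prod_(j in f :\ i) x j) = 0.
  by move: (xeig i); rewrite mul0r /signless_lap_apply hdeg_sum xik mulr1 -big_split.
have term_ge0 f : (f \in E) && (i \in f) -> 0 <= 1 + \prod_(j in f :\ i) x j.
  move=> _; have pr : \prod_(j in f :\ i) x j \is Num.real by apply: rpred_prod.
  have : `|\prod_(j in f :\ i) x j| <= 1.
    by rewrite normr_prod prodr_ile1 // => j _; rewrite normr_ge0 xle.
  by rewrite real_ler_norml // => /andP[+ _]; rewrite -subr_ge0 opprK addrC.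
apply/eqP; rewrite -addr_eq0 addrC; apply/eqP.
by apply: (psumr_eq0P term_ge0 sum0); rewrite eE ie.
Qed.

Lemma max_entry_is_singleton (x : {ffun 'I_n -> C}) (i : 'I_n) :
  is_real_vec x -> is_eigvec k E x 0 -> (forall j, `|x j| <= 1) ->
  `|x i| = 1 -> i \in singletons E.
Proof.
move=> xr xeig xle xi1; rewrite inE /hdeg cards_eq0; apply/eqP/setP => e.
rewrite !inE; apply/negP => /andP[eE ie].
have prod_i := max_entry_edge_product xr xeig xle xi1 eE ie.
have unit_e : forall j, j \in e -> `|x j| = 1.
  move=> j je; case: (eqVneq j i) => [-> //|ji].
  apply: (prod_norm1_factors (A := e :\ i)); first by move=> l _; apply: xle.
    by rewrite prod_i normrN1.
  by rewrite !inE ji.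
have const_e : forall j, j \in e -> x j = x i.
  move=> j je; have prod_j := max_entry_edge_product xr xeig xle (unit_e j je) eE je.
  apply/eqP; rewrite -eqr_opp -(mulrN1 (x j)) -prod_j -(big_setD1 _ je).
  by rewrite (big_setD1 _ ie) /= prod_i mulrN1.
have : \prod_(j in e :\ i) x j = x i ^+ k.-1.
  rewrite (eq_bigr (fun _ => x i)); last by move=> j; rewrite inE => /andP[_ /const_e].
  have card_e := cardsD1 i e; rewrite ie uniformE // add1n in card_e.
  by rewrite prodr_const card_e.
by rewrite prod_i -odd_halfK // real_unit_expr_double //; apply/eqP/neg1_neq1.
Qed.

End OddUniformity.

Section NontrivialEdges.
Hypothesis k_gt1 : (1 < k)%N.

Lemma unitvec_eigvec (c : C) (i : 'I_n) :
  c != 0 -> i \in singletons E -> is_eigvec k E (unitvec c i) 0.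
Proof.
move=> c0; rewrite inE /hdeg cards_eq0 => /eqP noedge.
have i_notin e : e \in E -> i \notin e.
  by move=> eE; apply/negP => ie; have := in_set0 e; rewrite -noedge inE eE ie.
split=> [|j].
  by apply: contraNneq c0 => /ffunP/(_ i); rewrite !ffunE eqxx => ->.
rewrite mul0r /signless_lap_apply big1 ?addr0 => [|e /andP[eE je]].
  case: (eqVneq j i) => [->|ji]; first by rewrite /hdeg noedge cards0 mul0r.
  by rewrite ffunE (negbTE ji) expr0n -subn1 subn_eq0 leqNgt k_gt1 mulr0.
have card_e := cardsD1 j e; rewrite je uniformE // add1n in card_e.
have : (0 < #|e :\ j|)%N by rewrite -ltnS -card_e.
case/card_gt0P => l le; rewrite (big_setD1 l) //= ffunE.
have lE : l \in e by move: le; rewrite inE => /andP[].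
have li : l != i by apply: contraNneq (i_notin e eE) => <-.
by rewrite (negbTE li) mul0r.
Qed.

Lemma unitvec_minimal_canonical (c : C) (i : 'I_n) :
  c \is Num.real -> `|c| = 1 -> i \in singletons E ->
  minimal_canonical_H_eigvec0 k E (unitvec c i).
Proof.
move=> cr c1 iS; have c0 : c != 0 by rewrite -normr_eq0 c1 oner_eq0.
split; [|split].
- by apply: (minimal_of_supp1 (i := i)); [apply: unitvec_eigvec | apply: supp_unitvec].
- by move=> j; rewrite ffunE; case: ifP.
- split; last by exists i; rewrite ffunE eqxx.
  by move=> j; rewrite ffunE; case: ifP; rewrite ?c1 ?normr0.
Qed.

Lemma minimal_canonical_is_unitvec (x : {ffun 'I_n -> C}) :
  odd k -> minimal_canonical_H_eigvec0 k E x ->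
  exists2 i, i \in singletons E & x = unitvec 1 i \/ x = unitvec (-1) i.
Proof.
move=> k_odd [[xeig xmin] [xr [xle [i xi1]]]].
have iS := max_entry_is_singleton k_odd xr xeig xle xi1.
have xi0 : x i != 0 by rewrite -normr_eq0 xi1 oner_eq0.
have supp_x : supp x = [set i].
  have sub_i : [set i] \subset supp x by rewrite sub1set inE.
  apply/eqP; rewrite eq_sym; apply: contraT => neq.
  case: xmin; exists (unitvec (x i) i); split; first exact: unitvec_eigvec.
  by rewrite supp_unitvec // properEneq neq sub_i.
have xE : x = unitvec (x i) i by apply: supp_sub1; rewrite supp_x.
exists i => //.
have : (x i == 1) || (x i == -1).
  by rewrite -sqrf_eq1 -real_normK ?xr // xi1 expr1n.
by case/orP=> /eqP xi; [left | right]; rewrite {1}xE xi.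
Qed.

End NontrivialEdges.

End Eigenvectors.

Theorem corollary5p1 (C : numClosedFieldType) (k n : nat)
  (E : {set {set 'I_n}}) :
  odd k -> (3 <= k)%N -> (k <= n)%N -> E != set0 ->
  (forall e, e \in E -> #|e| = k) ->
  exists s : seq {ffun 'I_n -> C},
    [/\ uniq s,
        size s = #|singletons E|,
        (forall x, x \in s -> - x \notin s) &
        (forall x, minimal_canonical_H_eigvec0 k E x <-> (x \in s \/ - x \in s))].
Proof.
move=> k_odd k_ge3 _ _ uniformE; have k_gt1 : (1 < k)%N by apply: ltnW.
exists [seq unitvec 1 i | i <- enum (singletons E)]; split.
- rewrite map_inj_uniq ?enum_uniq // => i j.
  by case/(unitvec_eq (oner_neq0 C)).
- by rewrite size_map -cardE.
- move=> _ /mapP[i _ ->]; apply/mapP => -[j _]; rewrite unitvecN.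
  case/unitvec_eq; first by rewrite oppr_eq0 oner_eq0.
  by move=> _ /eqP; rewrite (negbTE (@neg1_neq1 C)).
- move=> x; split.
  + case/(minimal_canonical_is_unitvec uniformE k_gt1 k_odd) => i iS [] ->;
      [left | right; rewrite unitvecN opprK];
      by apply/mapP; exists i; rewrite ?mem_enum.
  + case=> /mapP[i]; rewrite mem_enum => iS xE;
      [rewrite xE | rewrite -[x]opprK xE unitvecN];
      apply: (unitvec_minimal_canonical uniformE k_gt1) => //;
      by rewrite ?normrN ?normr1 ?rpredN ?real1.
Qed.
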